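(* Let $d\ge2$ and let $v=(v_1,\dots,v_d)\in\mathbb{R}^d$ satisfy $\sum_j v_j=1$ and $\sum_j v_j^2=d$. Let $v_{\max}=\max_j v_j$, $v_{\min}=\min_j v_j$, $\|v\|_1=\sum_j|v_j|$. Then $$\tfrac12\bigl[v_{\max}(\|v\|_1-1)+|v_{\min}|(\|v\|_1+1)\bigr]\ge d-\sqrt{d+1}+\tfrac2d\sqrt{d+1}-\tfrac2d,$$ with equality if and only if the components of $v$ arranged in nonincreasing order $v^\downarrow$ satisfy $$v^\downarrow_1=\frac{(d-1)\sqrt{d+1}+1}{d},\qquad v^\downarrow_2=\dots=v^\downarrow_d=\frac{1-\sqrt{d+1}}{d}.$$ *)

From mathcomp Require Import all_boot all_order all_algebra.
From mathcomp Require Import reals.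
Set Implicit Arguments. Unset Strict Implicit. Unset Printing Implicit Defensive.
Import Order.TTheory GRing.Theory Num.Theory.
Local Open Scope ring_scope.

Definition comps (R : realType) (d : nat) (v : 'I_d -> R) : seq R :=
  [seq v j | j <- enum 'I_d].

(* max_j v_j and min_j v_j (meaningful for d >= 1; the statement assumes d >= 2). *)
Definition vmax (R : realType) (d : nat) (v : 'I_d -> R) : R :=
  \big[Num.max/head 0 (comps v)]_(j < d) v j.
Definition vmin (R : realType) (d : nat) (v : 'I_d -> R) : R :=
  \big[Num.min/head 0 (comps v)]_(j < d) v j.

Definition norm1 (R : realType) (d : nat) (v : 'I_d -> R) : R :=
  \sum_(j < d) `|v j|.

Definition vdown (R : realType) (d : nat) (v : 'I_d -> R) : seq R :=
  sort (fun x y : R => y <= x) (comps v).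

From mathcomp Require Import all_boot all_order all_algebra.
From mathcomp Require Import reals.
From mathcomp Require Import ring lra.
Import Order.TTheory GRing.Theory Num.Theory.
Local Open Scope ring_scope.

(* Write a = max v and m = min v.  Since m <= v_j <= a, each square satisfies
   2 v_j^2 <= (a + |m|) |v_j| + (a - |m|) v_j; summing, with sum v_j^2 = d
   and sum v_j = 1, gives lhs >= d - a + |m|.  Samuelson's inequality
   (Cauchy-Schwarz on the other d - 1 coordinates) bounds a by the top entry
   of the extremal vector, and its counterpart for a lower bound of all
   coordinates bounds m by the other entry; this gives lhs >= rhs.  Equality
   forces a to attain Samuelson's bound, which happens only when all other
   coordinates coincide. *)

Section SquareSums.
Context {R : realDomainType} {I : finType}.

Lemma sum_sqr_sub (P : pred I) (x : I -> R) c :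
  \sum_(i | P i) (x i - c) ^+ 2 =
  \sum_(i | P i) x i ^+ 2 - 2 * c * \sum_(i | P i) x i + #|P|%:R * c ^+ 2.
Proof.
rewrite (eq_bigr (fun i => x i ^+ 2 - 2 * c * x i + c ^+ 2)) => [|i _].
  by rewrite big_split sumrB /= -mulr_sumr sumr_const -[c ^+ 2 *+ _]mulr_natl.
by ring.
Qed.

Lemma sqr_sum_le_card (P : pred I) (y : I -> R) :
  (\sum_(i | P i) y i) ^+ 2 <= #|P|%:R * \sum_(i | P i) y i ^+ 2.
Proof.
have [/card0_eq P0 | P_gt0] := posnP #|P|.
  by rewrite !big_pred0 // expr0n mulr0.
set m : R := #|P|%:R; set S := \sum_(i | P i) y i.
have m_gt0 : 0 < m by rewrite ltr0n.
have : 0 <= \sum_(i | P i) (m * y i - S) ^+ 2.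
  by apply: sumr_ge0 => i _; exact: sqr_ge0.
rewrite sum_sqr_sub -/m -mulr_sumr -/S.
under eq_bigr do rewrite exprMn.
rewrite -mulr_sumr => sum_ge0.
have : 0 <= m * (m * \sum_(i | P i) y i ^+ 2 - S ^+ 2) by lra.
by rewrite pmulr_rge0 // subr_ge0.
Qed.

Lemma samuelson (x : I -> R) k :
  (#|I|%:R * x k - \sum_i x i) ^+ 2 <=
  (#|I|%:R - 1) * (#|I|%:R * \sum_i x i ^+ 2 - (\sum_i x i) ^+ 2).
Proof.
have cardI : #|I| = #|I|.-1.+1 by rewrite prednK //; apply/card_gt0P; exists k.
have := sqr_sum_le_card (predC1 k) x.
rewrite cardC1 !(bigD1 k isT) /= cardI mulrSr addrK.
set T := \sum_(i | i != k) x i; set Q := \sum_(i | i != k) x i ^+ 2.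
have : 0 <= #|I|.-1%:R :> R := ler0n _ _.
set m := #|I|.-1%:R => m_ge0 CS.
(* the gap between the two sides is (m + 1) times the Cauchy-Schwarz gap *)
have : 0 <= (m + 1) * (m * Q - T ^+ 2) by apply: mulr_ge0; lra.
lra.
Qed.

Lemma sum_sqr_le_sqr_sum {y : I -> R} :
  (forall i, 0 <= y i) -> \sum_i y i ^+ 2 <= (\sum_i y i) ^+ 2.
Proof.
move=> y_ge0; rewrite [leRHS]expr2 mulr_suml; apply: ler_sum => i _.
rewrite expr2 ler_wpM2l // (bigD1 i) //= lerDl.
by apply: sumr_ge0 => j _.
Qed.

Lemma samuelson_lbound {x : I -> R} {m : R} : (forall i, m <= x i) ->
  #|I|%:R * \sum_i x i ^+ 2 - (\sum_i x i) ^+ 2 <=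
  (#|I|%:R - 1) * (#|I|%:R * m - \sum_i x i) ^+ 2.
Proof.
move=> x_ge_m; have x_sub_ge0 i : 0 <= x i - m by rewrite subr_ge0.
have := sum_sqr_le_sqr_sum x_sub_ge0.
rewrite sum_sqr_sub sumrB sumr_const -[m *+ _]mulr_natl.
rewrite (_ : #|xpredT| = #|I|) //.
set n : R := #|I|%:R; set S := \sum_i x i; set Q := \sum_i x i ^+ 2 => H.
have : 0 <= n * ((S - n * m) ^+ 2 - (Q - 2 * m * S + n * m ^+ 2)).
  by apply: mulr_ge0; [exact: ler0n | lra].
lra.
Qed.

Lemma sum_sqr_le_extremes {x : I -> R} {a m : R} :
  (forall i, m <= x i <= a) ->
  2 * \sum_i x i ^+ 2 <= (a + `|m|) * \sum_i `|x i| + (a - `|m|) * \sum_i x i.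
Proof.
move=> x_bnd; rewrite !mulr_sumr -big_split /=; apply: ler_sum => i _.
have /andP[m_le a_ge] := x_bnd i.
have m_abs : - m <= `|m| by rewrite -normrN ler_norm.
have [x_ge0 | x_lt0] := lerP 0 (x i).
  by rewrite (ger0_norm x_ge0); nra.
by rewrite (ltr0_norm x_lt0); nra.
Qed.

Lemma sum_sqr_single (y : I -> R) k :
  \sum_i y i ^+ 2 = y k ^+ 2 -> forall j, j != k -> y j = 0.
Proof.
rewrite (bigD1 k) //= -[RHS]addr0 => /addrI rest0 j j_neq_k.
apply/eqP; rewrite -sqrf_eq0; apply/eqP; move: j j_neq_k.
by apply: psumr_eq0P rest0 => j _; exact: sqr_ge0.
Qed.

End SquareSums.

Section Components.
Context {R : realType} {d : nat} (v : 'I_d -> R).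

Lemma head_comps : (0 < d)%N -> exists k, head 0 (comps v) = v k.
Proof.
move=> d_gt0; have : Ordinal d_gt0 \in enum 'I_d by rewrite mem_enum.
by rewrite /comps; case: (enum 'I_d) => [|j s] //= _; exists j.
Qed.

Lemma vmax_attained : (0 < d)%N -> exists k, vmax v = v k.
Proof.
move=> /head_comps [j head_j]; rewrite /vmax.
apply: (big_ind (fun x => exists k, x = v k)) => [|x y [k ->] [l ->]|k _].
- by exists j.
- by exists (if v k < v l then l else k); rewrite /Order.max; case: ifP.
- by exists k.
Qed.

Lemma vmin_attained : (0 < d)%N -> exists k, vmin v = v k.
Proof.
move=> /head_comps [j head_j]; rewrite /vmin.
apply: (big_ind (fun x => exists k, x = v k)) => [|x y [k ->] [l ->]|k _].
- by exists j.
- by exists (if v k < v l then k else l); rewrite /Order.min; case: ifP.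
- by exists k.
Qed.

Lemma norm1E : norm1 v = \sum_(x <- comps v) `|x|.
Proof. by rewrite /norm1 /comps big_map big_enum. Qed.

Lemma vdown_spike {k : 'I_d} {p q : R} :
  q <= p -> v k = p -> (forall j, j != k -> v j = q) ->
  vdown v = p :: nseq d.-1 q.
Proof.
move=> q_le_p vk_p v_q; rewrite /vdown /comps.
apply: (sorted_eq (leT := fun x y : R => y <= x)).
- by move=> ? ? ? /= ? ?; lra.
- by move=> x y /andP[? ?]; lra.
- by apply: sort_sorted => x y; exact: le_total.
- case: d.-1 => //= n; rewrite q_le_p /=.
  by elim: n => //= n ->; rewrite lexx.
rewrite perm_sort; have k_enum : k \in enum 'I_d by rewrite mem_enum.
apply: perm_trans (perm_map v (perm_to_rem k_enum)) _.
rewrite /= vk_p perm_cons (eq_in_map _ (fun=> q) _).1; last first.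
  by move=> j; rewrite (mem_rem_uniq _ (enum_uniq _)) => /andP[/v_q].
have map_cst (r : seq 'I_d) : [seq q | _ <- r] = nseq (size r) q.
  by elim: r => //= ? ? ->.
by rewrite map_cst size_rem // size_enum_ord.
Qed.

End Components.

Section Extremal.
Context {R : realType} {d : nat} {v : 'I_d -> R}.
Hypotheses (d_ge2 : (2 <= d)%N) (sum_v : \sum_(j < d) v j = 1)
  (sum_sqr_v : \sum_(j < d) v j ^+ 2 = d%:R).

Local Notation D := (d%:R : R).
Local Notation s := (Num.sqrt (D + 1)).
Local Notation top := (((D - 1) * s + 1) / D).
Local Notation bot := ((1 - s) / D).
Local Notation lhs :=
  (2^-1 * (vmax v * (norm1 v - 1) + `|vmin v| * (norm1 v + 1))).
Local Notation rhs := (D - s + 2 / D * s - 2 / D).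

Let d_gt0 : (0 < d)%N := ltnW d_ge2.
Let D_ge2 : 2 <= D. Proof. by rewrite (ler_nat R 2 d). Qed.
Let D_gt0 : 0 < D. Proof. by have := D_ge2; lra. Qed.
Let D_neq0 : D != 0. Proof. by rewrite gt_eqF. Qed.
Let s_sqr : s ^+ 2 = D + 1. Proof. by rewrite sqr_sqrtr // addr_ge0 // ltW. Qed.
Let s_gt1 : 1 < s.
Proof.
rewrite -(ltr_pXn2r (_ : (0 < 2)%N)) ?nnegrE ?sqrtr_ge0 // s_sqr expr1n.
by have := D_gt0; lra.
Qed.

Lemma top_sub_bot : top - bot = s.
Proof. by field. Qed.

Lemma rhs_eq_top_bot : rhs = D - top - bot.
Proof. by field. Qed.

Lemma v_le_top j : v j <= top.
Proof.
have := samuelson v j; rewrite card_ord sum_v sum_sqr_v expr1n => samuel.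
have gap : (D - 1) * (D * D - 1) = ((D - 1) * s) ^+ 2.
  by rewrite exprMn s_sqr; ring.
have : 0 <= (D - 1) * s by apply: mulr_ge0; have := D_ge2; have := s_gt1; lra.
rewrite ler_pdivlMr //; nra.
Qed.

Lemma vmax_le_top : vmax v <= top.
Proof. by have [k ->] := vmax_attained v d_gt0; exact: v_le_top. Qed.

Lemma vmin_le_bot : vmin v <= bot.
Proof.
have vmin_le j : vmin v <= v j by rewrite /vmin; exact: bigmin_le.
have := samuelson_lbound vmin_le.
rewrite card_ord sum_v sum_sqr_v expr1n => lbound.
have mean_ge : D * vmin v <= 1.
  have : \sum_(j < d) vmin v <= \sum_(j < d) v j by apply: ler_sum => j _.
  by rewrite sumr_const card_ord -[_ *+ d]mulr_natl sum_v.
have gap : D * D - 1 = (D - 1) * s ^+ 2 by rewrite s_sqr; ring.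
have : s ^+ 2 <= (D * vmin v - 1) ^+ 2.
  by rewrite -(ler_pM2l (_ : 0 < D - 1)) -?gap //; have := D_ge2; lra.
by rewrite ler_pdivlMr //; have := s_gt1; nra.
Qed.

Lemma lhs_ge_extremes : D - vmax v + `|vmin v| <= lhs.
Proof.
have v_bnd j : vmin v <= v j <= vmax v.
  by rewrite /vmin /vmax bigmin_le le_bigmax.
have := sum_sqr_le_extremes v_bnd; rewrite sum_v sum_sqr_v mulr1 -/(norm1 v).
by lra.
Qed.

Lemma rhs_le_lhs : rhs <= lhs.
Proof.
have := lhs_ge_extremes; have := vmax_le_top; have := vmin_le_bot.
have : - vmin v <= `|vmin v| by rewrite -normrN ler_norm.
by rewrite rhs_eq_top_bot; lra.
Qed.

Lemma lhs_eq_rhs_vdown : lhs = rhs -> vdown v = top :: nseq d.-1 bot.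
Proof.
move=> lhs_rhs.
have vmax_top : vmax v = top.
  apply: le_anti; rewrite vmax_le_top /=.
  have := lhs_ge_extremes; have := vmin_le_bot.
  have : - vmin v <= `|vmin v| by rewrite -normrN ler_norm.
  by rewrite lhs_rhs rhs_eq_top_bot; lra.
have [k vk_top] := vmax_attained v d_gt0; rewrite vmax_top in vk_top.
have bot_le_top : bot <= top by have := top_sub_bot; have := s_gt1; lra.
apply: (vdown_spike v bot_le_top (esym vk_top)) => j j_neq_k; apply/eqP.
rewrite -subr_eq0; apply/eqP; move: j j_neq_k.
apply: (@sum_sqr_single _ _ (fun j => v j - bot)).
rewrite sum_sqr_sub (_ : #|xpredT| = #|'I_d|) // card_ord sum_v sum_sqr_v.
rewrite -vk_top top_sub_bot mulr1.
apply/eqP; rewrite -subr_eq0; apply/eqP.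
rewrite (_ : _ - _ = (D - 1) * (D + 1 - s ^+ 2) / D); last by field.
by rewrite s_sqr subrr mulr0 mul0r.
Qed.

Lemma vdown_lhs_eq_rhs : vdown v = top :: nseq d.-1 bot -> lhs = rhs.
Proof.
move=> vdown_v.
have comps_perm : perm_eq (comps v) (top :: nseq d.-1 bot).
  by rewrite -vdown_v perm_sym perm_sort.
have top_in : top \in comps v by rewrite (perm_mem comps_perm) mem_head.
have v_vals j : v j = top \/ v j = bot.
  have : v j \in comps v by apply: map_f; rewrite mem_enum.
  rewrite (perm_mem comps_perm) in_cons mem_nseq.
  by case/orP => [/eqP -> | /andP[_ /eqP ->]]; [left | right].
have bot_le_top : bot <= top by have := top_sub_bot; have := s_gt1; lra.
have vmax_top : vmax v = top.
  apply: le_anti; rewrite vmax_le_top /=.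
  by case/mapP: top_in => k _ ->; rewrite /vmax le_bigmax.
have vmin_bot : vmin v = bot.
  apply: le_anti; rewrite vmin_le_bot /=.
  by have [k ->] := vmin_attained v d_gt0; case: (v_vals k) => ->.
have bot_lt0 : bot < 0 by rewrite pmulr_llt0 ?invr_gt0 //; have := s_gt1; lra.
have top_gt0 : 0 < top.
  by apply: divr_gt0 => //; have := D_ge2; have := s_gt1; nra.
have norm1_v : norm1 v = top - (D - 1) * bot.
  rewrite norm1E (perm_big _ comps_perm) /= big_cons big_nseq iter_addr_0.
  rewrite (gtr0_norm top_gt0) (ltr0_norm bot_lt0) -[_ *+ d.-1]mulr_natl.
  by rewrite -subn1 natrB //; ring.
rewrite vmax_top vmin_bot norm1_v ltr0_norm //.
apply/eqP; rewrite -subr_eq0; apply/eqP.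
rewrite (_ : _ - _ = (D - 1) * (s ^+ 2 - (D + 1)) / D); last by field.
by rewrite s_sqr subrr mulr0 mul0r.
Qed.

End Extremal.

Theorem lemmaS1 (R : realType) (d : nat) (v : 'I_d -> R)
  (hd : (2 <= d)%N)
  (hsum : \sum_(j < d) v j = 1)
  (hsq : \sum_(j < d) v j ^+ 2 = d%:R) :
  let s := Num.sqrt (d%:R + 1) in
  let lhs := 2^-1 * (vmax v * (norm1 v - 1) + `|vmin v| * (norm1 v + 1)) in
  let rhs := d%:R - s + 2 / d%:R * s - 2 / d%:R in
  rhs <= lhs /\
  (lhs = rhs <->
     vdown v = ((d%:R - 1) * s + 1) / d%:R :: nseq d.-1 ((1 - s) / d%:R)).
Proof.
move=> s lhs rhs; split; first exact: rhs_le_lhs hd hsum hsq.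
split; first exact: lhs_eq_rhs_vdown hd hsum hsq.
exact: vdown_lhs_eq_rhs hd hsum hsq.
Qed.
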